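(* Let $G=(V,E)$ be a graph with $n$ vertices and $J$ nonnegative interaction strengths, and suppose the Glauber dynamics for the Ising model on $G$ satisfies $\mathtt{gap}^{-1}\le n\log n$. Then there exists a subset $F\subset V$ of size $\lfloor\sqrt n/\log n\rfloor$ such that $$\sum_{u,v\in F,\,u\neq v}\mathrm{Cov}_\mu(\sigma(u),\sigma(v))\le\frac{2}{\log n}.$$
   Context: The Ising measure on $\{\pm1\}^V$ is $\mu(\sigma)=Z^{-1}\exp(\sum_{uv\in E}J_{uv}\sigma(u)\sigma(v))$ with $J_{uv}\ge0$. Glauber dynamics: at each step pick a uniform vertex $v$ and resample $\sigma(v)$ from its conditional law under $\mu$ given all other spins. $\mathtt{gap}=1-\lambda$, where $\lambda$ is the second largest eigenvalue of the transition kernel of this chain. *)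

From HB Require Import structures.
From mathcomp Require Import all_boot all_order all_algebra.
From mathcomp Require Import all_classical all_reals all_analysis.
Set Implicit Arguments. Unset Strict Implicit. Unset Printing Implicit Defensive.
Import Order.TTheory GRing.Theory Num.Theory.
Local Open Scope ring_scope.

(* Spin configurations on V = 'I_n : true <-> +1, false <-> -1. *)
Definition spins (n : nat) := {ffun 'I_n -> bool}.

Definition spin {R : realType} (b : bool) : R := if b then 1 else -1.

Section Ising.
Variables (R : realType) (n : nat).
Variables (E : rel 'I_n) (J : 'I_n -> 'I_n -> R).

Definition ising_energy (s : spins n) : R :=
  \sum_(u : 'I_n) \sum_(v : 'I_n | (u < v)%N && E u v)
     J u v * spin (s u) * spin (s v).

Definition ising_weight (s : spins n) : R := expR (ising_energy s).
Definition ising_Z : R := \sum_(s : spins n) ising_weight s.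
Definition ising_mu (s : spins n) : R := ising_weight s / ising_Z.

Definition ising_E (f : spins n -> R) : R := \sum_(s : spins n) ising_mu s * f s.

Definition ising_cov (u v : 'I_n) : R :=
  ising_E (fun s => spin (s u) * spin (s v))
  - ising_E (fun s => spin (s u)) * ising_E (fun s => spin (s v)).

Definition upd (s : spins n) (v : 'I_n) (b : bool) : spins n :=
  [ffun w => if w == v then b else s w].

(* Glauber transition kernel: pick v uniformly, resample s(v) from its
   conditional law under mu given the other spins. *)
Definition glauber (s t : spins n) : R :=
  n%:R^-1 * \sum_(v : 'I_n)
    (if [forall w, (w != v) ==> (s w == t w)]
     then ising_mu t / (ising_mu (upd s v true) + ising_mu (upd s v false))
     else 0).

Definition glauber_mx : 'M[R]_#|{: spins n}| :=
  \matrix_(i, j) glauber (enum_val i) (enum_val j).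
End Ising.

(* s is the list of eigenvalues of A, with multiplicity, in non-increasing
   order (all real). *)
Definition is_spectrum (R : realType) (m : nat) (A : 'M[R]_m) (s : seq R) :=
  sorted (fun x y : R => y <= x) s /\ char_poly A = \prod_(a <- s) ('X - a%:P).

(* spectral gap given the ordered spectrum: 1 - lambda_2 *)
Definition gap_of (R : realType) (s : seq R) : R := 1 - s`_1.

From HB Require Import structures.
From mathcomp Require Import all_boot all_order all_algebra.
From mathcomp Require Import all_classical all_reals all_analysis.
From mathcomp Require Import ring lra complex spectral sesquilinear.
Set Implicit Arguments.
Unset Strict Implicit.
Unset Printing Implicit Defensive.
Import Order.TTheory GRing.Theory Num.Theory.
Local Open Scope ring_scope.

(* The Glauber chain is reversible with respect to mu, so D P D^-1 with D = diag(sqrt mu)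
   is symmetric; its eigenvalue 1 is simple because single-site moves connect all
   configurations, and the spectral theorem yields the Poincare inequality
   gap * Var f <= E(f, f). For the magnetization M = sum_v sigma(v) one move changes M by
   at most 2, so E(M, M) <= 2 and sum_{u,v} Cov(sigma(u), sigma(v)) = Var M <= 2 / gap
   <= 2 n log n. The variances are nonnegative, and greedily deleting a vertex of largest
   row sum gives a set F of size k = floor(sqrt n / log n) whose sum over pairs is at most
   k (k - 1) / (n (n - 1)) times the total, i.e. at most 2 k^2 log n / n <= 2 / log n. *)

Lemma natr_mul_subr1_ge0 (R : numDomainType) m : 0 <= m%:R * (m%:R - 1) :> R.
Proof. by case: m => [|m]; rewrite ?mul0r // mulr_ge0 // -natr1 addrK. Qed.

Section PairSum.
Variables (R : realFieldType) (T : finType) (c : T -> T -> R).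
Hypothesis c_sym : forall u v, c u v = c v u.

Definition row_sum (F : {set T}) u := \sum_(v in F | u != v) c u v.
Definition pair_sum (F : {set T}) := \sum_(u in F) row_sum F u.

Lemma pair_sum_setD1 (F : {set T}) w : w \in F -> pair_sum (F :\ w) = pair_sum F - 2 * row_sum F w.
Proof.
move=> wF; rewrite /pair_sum /row_sum [in RHS](bigD1 w) //=.
have -> : \sum_(u in F :\ w) \sum_(v in F :\ w | u != v) c u v =
    \sum_(u in F | u != w) \sum_(v in F | (u != v) && (v != w)) c u v.
  apply: eq_big => [u|u _]; first by rewrite in_setD1 andbC.
  by apply: eq_bigl => v; rewrite in_setD1; case: (v == w); case: (v \in F); case: (u == v).
have -> : \sum_(u in F | u != w) \sum_(v in F | u != v) c u v =
    \sum_(u in F | u != w) (c u w + \sum_(v in F | (u != v) && (v != w)) c u v).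
  apply: eq_bigr => u /andP [uF uw].
  rewrite (bigD1 w) /=; last by rewrite wF.
  by congr (_ + _); apply: eq_bigl => v; rewrite andbA.
rewrite big_split /=.
have -> : \sum_(u in F | u != w) c u w = \sum_(v in F | w != v) c w v.
  by apply: eq_big => [v|v _]; [rewrite eq_sym | rewrite c_sym].
ring.
Qed.

Lemma exists_row_sum_ge_mean (F : {set T}) : (0 < #|F|)%N ->
  exists2 w, w \in F & pair_sum F <= #|F|%:R * row_sum F w.
Proof.
move=> /card_gt0P [x xF].
case: (boolP [exists w in F, pair_sum F <= #|F|%:R * row_sum F w]) => [/exists_inP //|].
move=> /exists_inPn small; exfalso.
have : \sum_(w in F) #|F|%:R * row_sum F w < \sum_(w in F) pair_sum F.
  apply: ltr_sum => [|w wF]; first by apply/hasP; exists x; rewrite ?mem_index_enum.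
  by rewrite ltNge small.
by rewrite -mulr_sumr sumr_const mulr_natl ltxx.
Qed.

Lemma exists_pair_sum_setD1_le (F : {set T}) : (0 < #|F|)%N ->
  exists2 w, w \in F & pair_sum (F :\ w) * #|F|%:R <= pair_sum F * (#|F|%:R - 2).
Proof.
move=> /exists_row_sum_ge_mean [w wF hw]; exists w => //.
rewrite pair_sum_setD1 //; lra.
Qed.

(* Greedily remove a vertex of largest row sum: the average over pairs never increases. *)
Lemma exists_subset_pair_sum_le k : (k <= #|T|)%N -> exists F : {set T},
  #|F| = k /\
  pair_sum F * (#|T|%:R * (#|T|%:R - 1)) <= pair_sum [set: T] * (k%:R * (k%:R - 1)).
Proof.
move=> /subKn <-; elim: (#|T| - k)%N (leq_subr k #|T|) => [|j IH] hj.
  by exists [set: T]; rewrite cardsT subn0.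
have [F [cF hF]] := IH (ltnW hj).
have F_gt0 : (0 < #|F|)%N by rewrite cF subn_gt0.
have [w wF hw] := exists_pair_sum_setD1_le F_gt0.
have cFw : #|F :\ w| = #|F|.-1 by rewrite [#|F|](cardsD1 w F) wF.
exists (F :\ w); split; first by rewrite cFw cF subnS.
rewrite subnS -cF; move: hF hw; rewrite -cF.
have := natr_mul_subr1_ge0 R #|T|; set NN := _ * _ => NN_ge0.
case: #|F| cFw F_gt0 => [//|[|m]] cFw _ hF hw.
  by rewrite (cards0_eq cFw) /pair_sum big_set0 mul0r /= mul0r mulr0.
rewrite /= -[m.+2]addn1 natrD -[m.+1]addn1 natrD !addrK in hF hw *.
move: (m%:R) (ler0n R m) => a a_ge0 in hF hw *.
have : (a + 1 + 1) * (pair_sum (F :\ w) * NN) <= (a + 1 + 1) * (pair_sum [set: T] * ((a + 1) * a)).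
  have : pair_sum (F :\ w) * (a + 1 + 1) * NN <= pair_sum F * NN * a by nra.
  nra.
by rewrite ler_pM2l //; lra.
Qed.
End PairSum.

Lemma one_sub_inv_le_ln (R : realType) n : (0 < n)%N -> 1 - n%:R^-1 <= ln (n%:R : R).
Proof.
move=> n_gt0; have n_pos : 0 < n%:R :> R by rewrite ltr0n.
have := @le_ln1Dx R (n%:R^-1 - 1); rewrite [1 + _]addrC subrK lnV ?posrE //.
have inv_pos : 0 < n%:R^-1 :> R by rewrite invr_gt0.
by move=> h; have := h ltac:(lra); lra.
Qed.

Lemma leq_of_mulr_le_sqrt (R : rcfType) n k (L : R) : (1 < n)%N ->
  1 - n%:R^-1 <= L -> k%:R * L <= Num.sqrt n%:R -> (k <= n)%N.
Proof.
move=> n_gt1 hL hk; rewrite leqNgt; apply/negP; rewrite -(ler_nat R) -natr1 => k_ge.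
set q := Num.sqrt (n%:R : R) in hk.
have qq : q * q = n%:R by rewrite -expr2 sqr_sqrtr // ler0n.
have q_ge0 : 0 <= q by exact: sqrtr_ge0.
have n_ge2 : 2 <= n%:R :> R by rewrite ler_nat.
have n_pos : 0 < n%:R :> R by lra.
have nL : n%:R - 1 <= n%:R * L.
  by move: hL; rewrite -(ler_pM2l n_pos) mulrBr mulr1 mulfV ?gt_eqF.
have nq : n%:R * n%:R - 1 <= n%:R * q by nra.
have : (n%:R * n%:R - 1) * (n%:R * n%:R - 1) <= n%:R * q * (n%:R * q).
  by apply: ler_pM => //; nra.
rewrite mulrACA qq; nra.
Qed.

Lemma pair_mean_bound (R : realFieldType) (N L SF SV : R) k :
  1 < N -> 0 < L -> k%:R <= N -> (k%:R * L) ^+ 2 <= N ->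
  SF * (N * (N - 1)) <= SV * (k%:R * (k%:R - 1)) -> SV <= 2 * N * L ->
  SF <= 2 / L.
Proof.
move=> N_gt1 L_gt0 kN kLN hSF hSV.
move: (k%:R) (ler0n R k) (natr_mul_subr1_ge0 R k) kN kLN hSF => a a_ge0 aa_ge0 kN kLN hSF.
have h1 : SF * (N * (N - 1)) <= 2 * N * L * (a * (a - 1)).
  exact: le_trans hSF (ler_wpM2r aa_ge0 hSV).
have h2 : a * (a - 1) * N <= a ^+ 2 * (N - 1) by nra.
have h3 : SF * (N * (N - 1)) * L <= 2 * N * (N - 1) by nra.
have NN_gt0 : 0 < N * (N - 1) by nra.
by rewrite ler_pdivlMr // -(ler_pM2l NN_gt0); lra.
Qed.

Lemma char_poly_conj (F : comNzRingType) n (Q Q' M : 'M[F]_n) :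
  Q *m Q' = 1%:M -> char_poly (Q *m M *m Q') = char_poly M.
Proof.
move=> QQ'; rewrite /char_poly.
set Qp := map_mx polyC Q; set Q'p := map_mx polyC Q'.
have QpQ'p : Qp *m Q'p = 1%:M by rewrite -map_mxM QQ' map_mx1.
have -> : char_poly_mx (Q *m M *m Q') = Qp *m char_poly_mx M *m Q'p.
  rewrite /char_poly_mx !map_mxM mulmxBr mulmxBl mul_mx_scalar -scalemxAl QpQ'p.
  by rewrite scalemx1.
by rewrite !det_mulmx mulrAC -det_mulmx QpQ'p det1 mul1r.
Qed.

Lemma sorted_top_simple (R : realDomainType) (t : R) (s : seq R) :
  sorted (fun x y => y <= x) s -> (1 < size s)%N -> {in s, forall x, x <= t} ->
  count_mem t s = 1%N -> s`_1 < t /\ {in s, forall x, x != t -> x <= s`_1}.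
Proof.
case: s => [|a0 [|a1 rest]] // s_sorted _ le_t count_t.
have le_a0 := order_path_min ge_trans s_sorted.
have t_in : t \in a0 :: a1 :: rest by rewrite -has_pred1 has_count count_t.
have a0t : a0 = t.
  apply/eqP; rewrite eq_le le_t ?mem_head //=.
  by move: t_in; rewrite inE => /predU1P [-> //|]; move/(allP le_a0).
move: s_sorted count_t; rewrite a0t /= eqxx add1n => /andP [a1t rest_sorted] [].
have le_a1 := order_path_min ge_trans rest_sorted.
move=> /eqP; rewrite addn_eq0 eqb0 => /andP [a1_neq _].
split => //; first by rewrite lt_neqAle a1_neq.
move=> x; rewrite !inE => /predU1P [-> /eqP //|] /predU1P [-> //|/(allP le_a1) //].
Qed.

Section SymmetricSpectralGap.
Local Open Scope sesquilinear_scope.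
Variable R : rcfType.
Local Notation C := R[i].
Local Notation rc := (real_complex R).
Variables (N : nat) (A : 'M[R]_N) (s : seq R) (v0 : 'rV[R]_N).
Local Notation Ac := (map_mx rc A).
Local Notation v0c := (map_mx rc v0).
Local Notation U := (spectralmx Ac).
Local Notation d i := (spectral_diag Ac 0 i).
Local Notation Uz z := (z *m U^t*).

Hypothesis A_sym : A^T = A.

Lemma conj_rc (x : R) : (rc x)^* = rc x.
Proof. by rewrite conj_Creal // complex_real. Qed.

Lemma Ac_spectral : Ac = U^t* *m diag_mx (spectral_diag Ac) *m U.
Proof.
rewrite -invmx_unitary ?spectral_unitarymx //; apply/orthomx_spectralP/hermitian_normalmx.
apply/is_hermitianmxP; rewrite expr0 scale1r; apply/matrixP => i j.
by rewrite !mxE conj_rc -[in LHS]A_sym mxE.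
Qed.

Lemma spectral_mulmx_trC : U *m U^t* = 1%:M.
Proof. exact/unitarymxP/spectral_unitarymx. Qed.

Lemma spectral_trC_mulmx : U^t* *m U = 1%:M.
Proof. by rewrite -invmx_unitary ?spectral_unitarymx // mulVmx ?spectral_unit. Qed.

Lemma spectral_row_eigen i : row i U *m Ac = d i *: row i U.
Proof.
have : U *m Ac = diag_mx (spectral_diag Ac) *m U.
  by rewrite [X in U *m X]Ac_spectral !mulmxA spectral_mulmx_trC mul1mx.
move/(congr1 (row i)); rewrite row_mul => ->.
by rewrite mul_diag_mx; apply/rowP => j; rewrite !mxE.
Qed.

Lemma spectral_row_dot i j : (row i U *m (row j U)^t*) 0 0 = (i == j)%:R.
Proof.
have := congr1 (fun M : 'M[C]_N => M i j) spectral_mulmx_trC; rewrite /= [RHS]mxE => <-.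
by rewrite !mxE; apply: eq_bigr => k _; rewrite !mxE.
Qed.

Lemma spectral_coordE (z : 'rV[C]_N) i : (Uz z) 0 i = (z *m (row i U)^t*) 0 0.
Proof. by rewrite !mxE; apply: eq_bigr => k _; rewrite !mxE. Qed.

Lemma spectral_normE (z : 'rV[C]_N) :
  (z *m z^t*) 0 0 = \sum_i (Uz z) 0 i * ((Uz z) 0 i)^*.
Proof.
have -> : z *m z^t* = Uz z *m (Uz z)^t*.
  by rewrite trmx_mul map_mxM trmxCK !mulmxA -(mulmxA z) spectral_trC_mulmx mulmx1.
by rewrite !mxE; apply: eq_bigr => i _; rewrite !mxE.
Qed.

Lemma spectral_quadE (z : 'rV[C]_N) :
  (z *m (1%:M - Ac) *m z^t*) 0 0 = \sum_i (1 - d i) * ((Uz z) 0 i * ((Uz z) 0 i)^*).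
Proof.
rewrite mulmxBr mulmx1 mulmxBl.
have -> : z *m Ac *m z^t* = Uz z *m diag_mx (spectral_diag Ac) *m (Uz z)^t*.
  by rewrite trmx_mul map_mxM trmxCK [X in z *m X]Ac_spectral !mulmxA.
rewrite mxE spectral_normE [X in _ + X]mxE mul_mx_diag mxE -sumrB.
by apply: eq_bigr => i _; rewrite !mxE; ring.
Qed.

Hypothesis psd : forall z : 'rV[C]_N, 0 <= (z *m (1%:M - Ac) *m z^t*) 0 0.
Hypothesis eigen1 : forall z : 'rV[C]_N, z *m Ac = z -> z = (z *m v0c^t*) 0 0 *: v0c.
Hypothesis v0A : v0 *m A = v0.
Hypothesis v0_unit : v0 *m v0^T = 1%:M.

Lemma spectral_diag_le1 i : d i <= 1.
Proof.
have := psd (row i U); rewrite mulmxBr mulmx1 spectral_row_eigen -{1}(scale1r (row i U)).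
by rewrite -scalerBl -scalemxAl mxE spectral_row_dot eqxx mulr1 subr_ge0.
Qed.

Lemma v0c_dot (a b : C) : ((a *: v0c) *m (b *: v0c)^t*) 0 0 = a * b^*.
Proof.
have v0c_unit : \sum_k v0c 0 k * (v0c 0 k)^* = 1.
  have := congr1 (fun M : 'M[R]_1 => rc (M 0 0)) v0_unit.
  rewrite /= !mxE eqxx mulr1n rmorph_sum rmorph1 => <-.
  by apply: eq_bigr => k _; rewrite !mxE conj_rc rmorphM.
rewrite -[RHS]mulr1 -v0c_unit mulr_sumr !mxE; apply: eq_bigr => k _.
by rewrite !mxE rmorphM /=; ring.
Qed.

(* Two rows of U with eigenvalue 1 would be orthonormal multiples of v0. *)
Lemma spectral_diag_eq1_inj i j : d i = 1 -> d j = 1 -> i = j.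
Proof.
pose cf k := (row k U *m v0c^t*) 0 0.
have rowE k : d k = 1 -> row k U = cf k *: v0c.
  by move=> dk; apply: eigen1; rewrite spectral_row_eigen dk scale1r.
move=> /rowE ri /rowE rj; apply/eqP; apply: contraT => ij.
have := spectral_row_dot i j; rewrite (negbTE ij) ri rj v0c_dot => h0.
have := spectral_row_dot i i; rewrite eqxx ri v0c_dot => h1.
have := spectral_row_dot j j; rewrite eqxx rj v0c_dot => h2.
have : (cf i * (cf j)^*) * (cf j * (cf i)^*) = 1.
  by rewrite [cf j * _]mulrC mulrACA h1 mul1r mulrC h2.
by rewrite h0 mul0r => /eqP; rewrite eq_sym oner_eq0.
Qed.

(* The coordinates w of v0 in the eigenbasis satisfy w D = w and have norm 1. *)
Lemma exists_spectral_diag_eq1 : exists i, d i = 1.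
Proof.
pose w := Uz v0c.
have wd : w *m diag_mx (spectral_diag Ac) = w.
  have v0cA : v0c *m Ac = v0c by rewrite -map_mxM v0A.
  by rewrite /w -[in RHS]v0cA [X in _ *m X *m _^t*]Ac_spectral !mulmxA -(mulmxA _ U)
    spectral_mulmx_trC mulmx1.
have [i wi] : exists i, w 0 i != 0.
  apply/existsP; apply: contraT; rewrite negb_exists => /forallP w0.
  have := v0c_dot 1 1; rewrite !scale1r spectral_normE big1 => [|i _].
    by rewrite conjC1 mulr1 => /eqP; rewrite eq_sym oner_eq0.
  by rewrite (eqP (negbNE (w0 i))) mul0r.
exists i; have := congr1 (fun M : 'rV[C]_N => M 0 i) wd; rewrite /= mul_mx_diag mxE.
by move/eqP; rewrite -{2}[w 0 i]mulr1 (inj_eq (mulfI wi)) => /eqP.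
Qed.

Hypothesis s_sorted : sorted (fun x y => y <= x) s.
Hypothesis A_char : char_poly A = \prod_(a <- s) ('X - a%:P).
Hypothesis N_gt1 : (1 < N)%N.

Lemma spectrum_perm : perm_eq (map rc s) [seq d i | i <- enum 'I_N].
Proof.
apply: prod_XsubC_eq; rewrite !big_map.
transitivity (char_poly Ac).
  rewrite -map_char_poly A_char rmorph_prod; apply: eq_bigr => a _.
  by rewrite /= map_polyXsubC.
rewrite [X in char_poly X]Ac_spectral char_poly_conj ?spectral_trC_mulmx // char_poly_trig ?diag_mx_is_trig //.
by apply: eq_bigr => i _; rewrite mxE eqxx mulr1n.
Qed.

Lemma second_eigenvalue_bounds : s`_1 < 1 /\ forall i, d i != 1 -> d i <= rc s`_1.
Proof.
have [i0 di0] := exists_spectral_diag_eq1.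
have mem_s x : (rc x \in map rc s) = [exists i, d i == rc x].
  rewrite (perm_mem spectrum_perm); apply/mapP/existsP => [[i _ ->]|[i /eqP <-]].
    by exists i.
  by exists i; rewrite ?mem_enum.
have size_s : (1 < size s)%N.
  by have := size_char_poly A; rewrite A_char size_prod_XsubC => -[->].
have le1 : {in s, forall x, x <= 1}.
  move=> x; rewrite -(mem_map (@complexI R)) mem_s => /existsP [i /eqP dix].
  by rewrite -lecR rmorph1 -dix spectral_diag_le1.
have count1 : count_mem 1 s = 1%N.
  transitivity (count_mem (rc 1) (map rc s)).
    by rewrite count_map; apply: eq_count => x /=; rewrite (inj_eq (@complexI R)).
  rewrite rmorph1 (permP spectrum_perm) count_map.
  rewrite (@eq_count _ _ (pred1 i0)) ?count_uniq_mem ?enum_uniq ?mem_enum // => i /=.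
  apply/eqP/eqP => [di1|->]; last by rewrite di0.
  exact: spectral_diag_eq1_inj.
have [s1 s_le] := sorted_top_simple s_sorted size_s le1 count1.
split=> // i di1.
have : d i \in map rc s by rewrite (perm_mem spectrum_perm) map_f ?mem_enum.
case/mapP => x xs dix; rewrite dix lecR; apply: s_le => //.
by apply: contra di1; rewrite dix => /eqP ->.
Qed.

Lemma map_quad_rc (M : 'M[R]_N) (x : 'rV[R]_N) :
  rc ((x *m M *m x^T) 0 0) = (map_mx rc x *m map_mx rc M *m (map_mx rc x)^t*) 0 0.
Proof.
have -> : (map_mx rc x)^t* = map_mx rc x^T.
  by apply/matrixP => i j; rewrite !mxE conj_rc.
by rewrite -!map_mxM [RHS]mxE.
Qed.

Lemma symmetric_spectral_gap :
  0 < 1 - s`_1 /\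
  forall x : 'rV[R]_N, x *m v0^T = 0 ->
    (1 - s`_1) * (x *m x^T) 0 0 <= (x *m (1%:M - A) *m x^T) 0 0.
Proof.
have [s1_lt1 d_le_s1] := second_eigenvalue_bounds.
split=> [|x x_v0]; first by rewrite subr_gt0.
have [i0 di0] := exists_spectral_diag_eq1.
pose z := map_mx rc x.
have z_i0 : (Uz z) 0 i0 = 0.
  have rowE : row i0 U = (row i0 U *m v0c^t*) 0 0 *: v0c.
    by apply: eigen1; rewrite spectral_row_eigen di0 scale1r.
  rewrite spectral_coordE rowE; set c := (row i0 U *m v0c^t*) 0 0.
  transitivity (c^* * rc ((x *m v0^T) 0 0)); last by rewrite x_v0 mxE rmorph0 mulr0.
  rewrite !mxE rmorph_sum mulr_sumr; apply: eq_bigr => k _.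
  by rewrite !mxE !rmorphM /= conj_rc; ring.
have := map_quad_rc 1%:M x; rewrite mulmx1 map_mx1 mulmx1 spectral_normE => normE.
rewrite -lecR rmorphM rmorphB rmorph1 /= map_quad_rc map_mxB map_mx1 spectral_quadE normE.
rewrite mulr_sumr; apply: ler_sum => i _.
have [->|ii0] := eqVneq i i0; first by rewrite z_i0 mul0r !mulr0.
apply: ler_wpM2r; first exact: mul_conjC_ge0.
rewrite lerD2l lerN2 d_le_s1 //.
by apply: contra ii0 => /eqP di1; rewrite (spectral_diag_eq1_inj di1 di0).
Qed.

End SymmetricSpectralGap.

Section GlauberChain.
Variables (R : realType) (n : nat) (E : rel 'I_n) (J : 'I_n -> 'I_n -> R).
Local Notation mu := (ising_mu E J).
Local Notation P := (glauber E J).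

Definition agree_off (v : 'I_n) (s t : spins n) := [forall w, (w != v) ==> (s w == t w)].

Definition fiber_mass (s : spins n) v := mu (upd s v true) + mu (upd s v false).

Lemma glauberE s t :
  P s t = n%:R^-1 * \sum_v (if agree_off v s t then mu t / fiber_mass s v else 0).
Proof. by []. Qed.

Lemma ising_Z_gt0 : 0 < ising_Z E J.
Proof.
rewrite /ising_Z (bigD1 [ffun => true]) //=; apply: ltr_pwDl; first exact: expR_gt0.
by apply: sumr_ge0 => s _; exact/ltW/expR_gt0.
Qed.

Lemma ising_mu_gt0 s : 0 < mu s.
Proof. by rewrite divr_gt0 ?expR_gt0 ?ising_Z_gt0. Qed.

Lemma sum_ising_mu : \sum_s mu s = 1.
Proof. by rewrite -mulr_suml divff // gt_eqF // ising_Z_gt0. Qed.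

Lemma fiber_mass_gt0 s v : 0 < fiber_mass s v.
Proof. by rewrite addr_gt0 ?ising_mu_gt0. Qed.

Lemma agree_offE v s t : agree_off v s t = (t == upd s v (t v)).
Proof.
apply/forallP/eqP => [H|->].
  apply/ffunP => w; rewrite ffunE; case: eqP => [->//|/eqP ne].
  by move: (H w); rewrite ne /= => /eqP.
by move=> w; apply/implyP => ne; rewrite ffunE (negbTE ne).
Qed.

Lemma agree_off_sym v s t : agree_off v s t = agree_off v t s.
Proof. by apply: eq_forallb => w; rewrite [s w == _]eq_sym. Qed.

Lemma agree_off_upd v s b : agree_off v s (upd s v b).
Proof. by rewrite agree_offE ffunE eqxx. Qed.

Lemma upd_agree_off v s t b : agree_off v s t -> upd s v b = upd t v b.
Proof.
move=> /forallP st; apply/ffunP => w; rewrite !ffunE; case: eqP => // /eqP ne.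
exact/eqP/(implyP (st w) ne).
Qed.

Lemma sum_agree_off v s (g : spins n -> R) :
  \sum_t (if agree_off v s t then g t else 0) = g (upd s v true) + g (upd s v false).
Proof.
have upd_neq : upd s v true != upd s v false.
  by apply/eqP => /ffunP/(_ v); rewrite !ffunE eqxx.
rewrite (bigD1 (upd s v true)) //= agree_off_upd (bigD1 (upd s v false)) 1?eq_sym //=.
rewrite agree_off_upd big1 ?addr0 // => t /andP [t_true t_false].
case: ifP => //; rewrite agree_offE => /eqP tE.
by move: t_true t_false; rewrite tE; case: (t v); rewrite eqxx.
Qed.

Lemma glauber_row_sum s : (0 < n)%N -> \sum_t P s t = 1.
Proof.
move=> n_gt0; under eq_bigr do rewrite glauberE.
rewrite -mulr_sumr exchange_big /=.
under eq_bigr => v _ do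
  rewrite (sum_agree_off v s (fun t => mu t / fiber_mass s v)) -mulrDl divff ?gt_eqF ?fiber_mass_gt0 //.
by rewrite sumr_const card_ord mulVf // pnatr_eq0 -lt0n.
Qed.

Lemma glauber_reversible s t : mu s * P s t = mu t * P t s.
Proof.
rewrite !glauberE !(mulrCA (mu _)); congr (_ * _); rewrite !mulr_sumr.
apply: eq_bigr => v _; rewrite agree_off_sym; case: ifP => [st|_]; last by rewrite !mulr0.
by rewrite /fiber_mass !(upd_agree_off _ st) mulrCA.
Qed.

Lemma glauber_ge0 s t : 0 <= P s t.
Proof.
rewrite glauberE mulr_ge0 ?invr_ge0 ?ler0n //; apply: sumr_ge0 => v _.
by case: ifP => // _; rewrite divr_ge0 // ltW ?ising_mu_gt0 ?fiber_mass_gt0.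
Qed.

Lemma glauber_upd_gt0 s v b : (0 < n)%N -> 0 < P s (upd s v b).
Proof.
move=> n_gt0; rewrite glauberE mulr_gt0 ?invr_gt0 ?ltr0n // (bigD1 v) //= agree_off_upd.
rewrite ltr_pwDl //; first by rewrite divr_gt0 ?ising_mu_gt0 ?fiber_mass_gt0.
apply: sumr_ge0 => w _.
by case: ifP => // _; rewrite divr_ge0 // ltW ?ising_mu_gt0 ?fiber_mass_gt0.
Qed.

End GlauberChain.

(* Walk from s to the all-plus configuration, flipping the sites 0, 1, ... in turn. *)
Lemma upd_invariant_const n (X : Type) (g : spins n -> X) :
  (forall s v b, g (upd s v b) = g s) -> forall s, g s = g [ffun => true].
Proof.
move=> g_upd s.
pose sk k := [ffun w : 'I_n => if (w < k)%N then true else s w] : spins n.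
have step k : g (sk k) = g (sk k.+1).
  case: (ltnP k n) => [k_lt|k_ge].
    suff -> : sk k.+1 = upd (sk k) (Ordinal k_lt) true by rewrite g_upd.
    apply/ffunP => w; rewrite !ffunE ltnS.
    have [->|wk] := eqVneq w (Ordinal k_lt); first by rewrite /= leqnn.
    by rewrite leq_eqVlt -[w == k :> nat]/(w == Ordinal k_lt) (negbTE wk).
  by congr g; apply/ffunP => w; rewrite !ffunE !(leq_trans (ltn_ord w)) ?leqW.
have gk k : g (sk 0%N) = g (sk k) by elim: k => [//|k ->]; exact: step.
transitivity (g (sk 0%N)); first by congr g; apply/ffunP => w; rewrite ffunE.
by rewrite (gk n); congr g; apply/ffunP => w; rewrite !ffunE ltn_ord.
Qed.

Lemma sum_sym_weighted_diff (K : comNzRingType) (I : finType) (w : I -> I -> K) (f h : I -> K) :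
  (forall i j, w i j = w j i) ->
  \sum_i \sum_j w i j * ((f i - f j) * (h i - h j)) =
  2 * (\sum_i \sum_j w i j * (f i * h i) - \sum_i \sum_j w i j * (f i * h j)).
Proof.
move=> w_sym; have swap (F : I -> I -> K) : \sum_i \sum_j w i j * F j i = \sum_i \sum_j w i j * F i j.
  by rewrite exchange_big; apply: eq_bigr => i _; apply: eq_bigr => j _; rewrite w_sym.
transitivity (\sum_i \sum_j (w i j * (f i * h i) + w i j * (f j * h j)
     - w i j * (f i * h j) - w i j * (f j * h i))).
  by apply: eq_bigr => i _; apply: eq_bigr => j _; ring.
under eq_bigr do rewrite !sumrB big_split /=.
by rewrite !sumrB big_split /= (swap (fun j i => f i * h i)) (swap (fun j i => f j * h i)); ring.
Qed.

Section SymmetrizedGlauber.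
Local Open Scope sesquilinear_scope.
Variables (R : realType) (n : nat) (E : rel 'I_n) (J : 'I_n -> 'I_n -> R).
Local Notation mu := (ising_mu E J).
Local Notation P := (glauber E J).
Local Notation N := #|{: spins n}|.
Local Notation C := R[i].
Local Notation rc := (real_complex R).

Definition ising_var (g : spins n -> R) := ising_E E J (fun t => (g t - ising_E E J g) ^+ 2).

Definition glauber_dirichlet (g : spins n -> R) :=
  (\sum_s \sum_t mu s * P s t * (g s - g t) ^+ 2) / 2.

Lemma sum_enum_val (F : spins n -> R) : \sum_(i < N) F (enum_val i) = \sum_t F t.
Proof. by rewrite -big_enum_val. Qed.

Definition sqrt_mu (i : 'I_N) := Num.sqrt (mu (enum_val i)).

Lemma sqrt_mu_gt0 i : 0 < sqrt_mu i.
Proof. by rewrite sqrtr_gt0 ising_mu_gt0. Qed.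

Lemma sqrt_mu_neq0 i : sqrt_mu i != 0.
Proof. by rewrite gt_eqF ?sqrt_mu_gt0. Qed.

Lemma sqrt_mu_sqr i : sqrt_mu i * sqrt_mu i = mu (enum_val i).
Proof. by rewrite -expr2 sqr_sqrtr // ltW // ising_mu_gt0. Qed.

(* D P D^-1 with D = diag(sqrt mu): symmetric by reversibility, and similar to P. *)
Definition sym_glauber_mx : 'M[R]_N :=
  \matrix_(i, j) (sqrt_mu i * P (enum_val i) (enum_val j) / sqrt_mu j).

Definition sqrt_mu_row : 'rV[R]_N := \row_i sqrt_mu i.

Lemma sym_glauber_mx_tr : sym_glauber_mx^T = sym_glauber_mx.
Proof.
apply/matrixP => i j; rewrite !mxE.
have := glauber_reversible E J (enum_val j) (enum_val i); rewrite -!sqrt_mu_sqr => rev.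
have := sqrt_mu_neq0 i; have := sqrt_mu_neq0 j => nj ni.
transitivity (sqrt_mu j * sqrt_mu j * P (enum_val j) (enum_val i) / (sqrt_mu i * sqrt_mu j)).
  by field; rewrite ni nj.
by rewrite rev; field; rewrite ni nj.
Qed.

Lemma char_poly_sym_glauber_mx : char_poly sym_glauber_mx = char_poly (glauber_mx E J).
Proof.
pose D := diag_mx (\row_i sqrt_mu i); pose D' := diag_mx (\row_i (sqrt_mu i)^-1).
have -> : sym_glauber_mx = D *m glauber_mx E J *m D'.
  by apply/matrixP => i j; rewrite mul_mx_diag mul_diag_mx !mxE.
apply: char_poly_conj; apply/matrixP => i j; rewrite mul_diag_mx !mxE.
by case: eqP => [->|_]; rewrite ?mulr0n ?mulr0 // !mulr1n divff ?sqrt_mu_neq0.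
Qed.

Lemma sqrt_mu_row_fixed : (0 < n)%N -> sqrt_mu_row *m sym_glauber_mx = sqrt_mu_row.
Proof.
move=> n_gt0; apply/rowP => j; rewrite !mxE.
transitivity (\sum_(i < N) mu (enum_val i) * P (enum_val i) (enum_val j) / sqrt_mu j).
  by apply: eq_bigr => i _; rewrite !mxE -sqrt_mu_sqr !mulrA.
rewrite -mulr_suml; under eq_bigr do rewrite glauber_reversible.
rewrite -mulr_sumr (sum_enum_val (P (enum_val j))) glauber_row_sum // mulr1 -sqrt_mu_sqr.
by rewrite mulfK ?sqrt_mu_neq0.
Qed.

Lemma sqrt_mu_row_unit : sqrt_mu_row *m sqrt_mu_row^T = 1%:M.
Proof.
apply/matrixP => i j; rewrite !ord1 !mxE /=.
under eq_bigr do rewrite !mxE sqrt_mu_sqr.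
by rewrite (sum_enum_val mu) sum_ising_mu.
Qed.

(* The Dirichlet form of the chain, written in the coordinates z = f * sqrt mu. *)
Lemma sym_glauber_quadE (K : comNzRingType) (phi : {rmorphism R -> K}) (z z' : 'rV[K]_N) :
  (0 < n)%N ->
  2 * (z *m (1%:M - map_mx phi sym_glauber_mx) *m z'^T) 0 0 =
  \sum_i \sum_j phi (mu (enum_val i) * P (enum_val i) (enum_val j)) *
     ((z 0 i * phi (sqrt_mu i)^-1 - z 0 j * phi (sqrt_mu j)^-1) *
      (z' 0 i * phi (sqrt_mu i)^-1 - z' 0 j * phi (sqrt_mu j)^-1)).
Proof.
move=> n_gt0.
pose f i := z 0 i * phi (sqrt_mu i)^-1; pose h i := z' 0 i * phi (sqrt_mu i)^-1.
rewrite (@sum_sym_weighted_diff _ _ _ f h); last by move=> i j; rewrite glauber_reversible.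
congr (_ * _).
have zf i : z 0 i = phi (sqrt_mu i) * f i.
  by rewrite /f mulrCA -rmorphM divff ?rmorph1 ?mulr1 ?sqrt_mu_neq0.
have zh i : z' 0 i = phi (sqrt_mu i) * h i.
  by rewrite /h mulrCA -rmorphM divff ?rmorph1 ?mulr1 ?sqrt_mu_neq0.
rewrite mulmxBr mulmx1 mulmxBl mxE [X in _ + X]mxE; congr (_ - _).
  rewrite mxE; apply: eq_bigr => i _.
  rewrite -mulr_suml -rmorph_sum -mulr_sumr (sum_enum_val (P (enum_val i))).
  by rewrite glauber_row_sum // mulr1 mxE zf zh -sqrt_mu_sqr rmorphM; ring.
rewrite mxE; under eq_bigr => j _ do rewrite mxE mulr_suml.
rewrite exchange_big /=; apply: eq_bigr => i _; apply: eq_bigr => j _.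
rewrite !mxE zf zh.
have -> : mu (enum_val i) * P (enum_val i) (enum_val j) =
    sqrt_mu i * (sqrt_mu i * P (enum_val i) (enum_val j) / sqrt_mu j) * sqrt_mu j.
  by rewrite -sqrt_mu_sqr; field; rewrite sqrt_mu_neq0.
rewrite !rmorphM; ring.
Qed.

Lemma sym_glauber_quadE_C (z : 'rV[C]_N) : (0 < n)%N ->
  2 * (z *m (1%:M - map_mx rc sym_glauber_mx) *m z^t*) 0 0 =
  \sum_i \sum_j rc (mu (enum_val i) * P (enum_val i) (enum_val j)) *
     ((z 0 i * rc (sqrt_mu i)^-1 - z 0 j * rc (sqrt_mu j)^-1) *
      (z 0 i * rc (sqrt_mu i)^-1 - z 0 j * rc (sqrt_mu j)^-1)^*).
Proof.
move=> n_gt0; rewrite -map_trmx sym_glauber_quadE //.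
by apply: eq_bigr => i _; apply: eq_bigr => j _; rewrite !mxE rmorphB !rmorphM /= !conj_rc.
Qed.

Lemma glauber_weight_ge0 (i j : 'I_N) : 0 <= rc (mu (enum_val i) * P (enum_val i) (enum_val j)).
Proof. by rewrite ler0c mulr_ge0 ?glauber_ge0 // ltW // ising_mu_gt0. Qed.

Lemma sym_glauber_psd (z : 'rV[C]_N) : (0 < n)%N ->
  0 <= (z *m (1%:M - map_mx rc sym_glauber_mx) *m z^t*) 0 0.
Proof.
move=> n_gt0; rewrite -(pmulr_rge0 _ (ltr0n _ 2)) sym_glauber_quadE_C //.
apply: sumr_ge0 => i _; apply: sumr_ge0 => j _.
by rewrite mulr_ge0 ?glauber_weight_ge0 ?mul_conjC_ge0.
Qed.

(* A vanishing Dirichlet form forces z / sqrt mu to be invariant under every single-site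
   update, hence constant. *)
Lemma sym_glauber_eigen1 (z : 'rV[C]_N) : (0 < n)%N -> z *m map_mx rc sym_glauber_mx = z ->
  z = (z *m (map_mx rc sqrt_mu_row)^t*) 0 0 *: map_mx rc sqrt_mu_row.
Proof.
move=> n_gt0 zA.
pose f i := z 0 i * rc (sqrt_mu i)^-1.
have term_ge0 i j : 0 <= rc (mu (enum_val i) * P (enum_val i) (enum_val j)) *
    ((f i - f j) * (f i - f j)^*).
  by rewrite mulr_ge0 ?glauber_weight_ge0 ?mul_conjC_ge0.
have := sym_glauber_quadE_C z n_gt0.
rewrite mulmxBr mulmx1 zA subrr mul0mx mxE mulr0 => /esym/psumr_eq0P sum0.
have {}sum0 i : \sum_j rc (mu (enum_val i) * P (enum_val i) (enum_val j)) *
    ((f i - f j) * (f i - f j)^*) = 0.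
  by apply: sum0 => // k _; apply: sumr_ge0.
have f_upd i v b : f i = f (enum_rank (upd (enum_val i) v b)).
  have /eqP := psumr_eq0P (fun j _ => term_ge0 i j) (sum0 i) (i := enum_rank (upd (enum_val i) v b)) isT.
  rewrite mulf_eq0 => /orP [].
    by rewrite fmorph_eq0 enum_rankK mulf_eq0 (gt_eqF (ising_mu_gt0 _ _ _))
      (gt_eqF (glauber_upd_gt0 _ _ _ _ _ n_gt0)).
  by rewrite mul_conjC_eq0 subr_eq0 => /eqP.
pose g t := f (enum_rank t).
have g_upd s v b : g (upd s v b) = g s.
  by rewrite /g [in RHS](f_upd (enum_rank s) v b) enum_rankK.
pose c := g [ffun => true].
have zc i : z 0 i = c * rc (sqrt_mu i).
  rewrite /c -(upd_invariant_const g_upd (enum_val i)) /g enum_valK /f -mulrA -rmorphM.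
  by rewrite mulVf ?rmorph1 ?mulr1 ?sqrt_mu_neq0.
have -> : (z *m (map_mx rc sqrt_mu_row)^t*) 0 0 = c.
  rewrite mxE; transitivity (c * rc (\sum_(i < N) mu (enum_val i))).
    rewrite rmorph_sum mulr_sumr; apply: eq_bigr => i _.
    by rewrite !mxE zc conj_rc -sqrt_mu_sqr rmorphM mulrA.
  by rewrite (sum_enum_val mu) sum_ising_mu rmorph1 mulr1.
by apply/rowP => i; rewrite !mxE zc.
Qed.

Lemma card_spins_gt1 : (0 < n)%N -> (1 < N)%N.
Proof.
by move=> n_gt0; rewrite card_ffun card_bool card_ord -{1}(expn0 2) ltn_exp2l.
Qed.

Lemma glauber_poincare (sp : seq R) (g : spins n -> R) : (0 < n)%N ->
  is_spectrum (glauber_mx E J) sp ->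
  0 < gap_of sp /\ gap_of sp * ising_var g <= glauber_dirichlet g.
Proof.
move=> n_gt0 [sp_sorted sp_char].
have [gap_gt0 gap_quad] := symmetric_spectral_gap sym_glauber_mx_tr
  (fun z => sym_glauber_psd z n_gt0) (fun z => sym_glauber_eigen1 n_gt0)
  (sqrt_mu_row_fixed n_gt0) sqrt_mu_row_unit sp_sorted
  (etrans char_poly_sym_glauber_mx sp_char) (card_spins_gt1 n_gt0).
split=> //.
pose x : 'rV[R]_N := \row_i (sqrt_mu i * (g (enum_val i) - ising_E E J g)).
have x_v0 : x *m sqrt_mu_row^T = 0.
  apply/rowP => i; rewrite ord1 !mxE.
  under eq_bigr do rewrite !mxE mulrAC sqrt_mu_sqr mulrBr.
  rewrite sumrB (sum_enum_val (fun t => mu t * g t)) -mulr_suml (sum_enum_val mu).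
  by rewrite sum_ising_mu mul1r subrr.
have xx : (x *m x^T) 0 0 = ising_var g.
  transitivity (\sum_t mu t * (g t - ising_E E J g) ^+ 2) => //.
  rewrite mxE -(sum_enum_val (fun t => mu t * (g t - ising_E E J g) ^+ 2)).
  by apply: eq_bigr => k _; rewrite !mxE mulrACA sqrt_mu_sqr -expr2.
have := @sym_glauber_quadE _ idfun x x n_gt0; rewrite map_mx_id // => quadE.
have dirE : \sum_s \sum_t mu s * P s t * (g s - g t) ^+ 2 =
    2 * (x *m (1%:M - sym_glauber_mx) *m x^T) 0 0.
  rewrite quadE -(sum_enum_val (fun s => \sum_t mu s * P s t * (g s - g t) ^+ 2)).
  apply: eq_bigr => i _.
  rewrite -(sum_enum_val (fun t => mu (enum_val i) * P (enum_val i) t * (g (enum_val i) - g t) ^+ 2)).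
  apply: eq_bigr => j _; rewrite !mxE /= (mulrC (sqrt_mu i)) (mulrC (sqrt_mu j)).
  by rewrite !mulfK ?sqrt_mu_neq0 //; ring.
by rewrite /glauber_dirichlet dirE [2 * _]mulrC mulfK ?pnatr_eq0 // -xx; exact: gap_quad.
Qed.

End SymmetrizedGlauber.

Definition magnetization {R : realType} {n} (s : spins n) : R := \sum_v spin (s v).

Section Magnetization.
Variables (R : realType) (n : nat) (E : rel 'I_n) (J : 'I_n -> 'I_n -> R).
Local Notation mu := (ising_mu E J).
Local Notation P := (glauber E J).
Local Notation EE := (ising_E E J).

Lemma magnetization_agree_off v (s t : spins n) : agree_off v s t ->
  magnetization s - magnetization t = spin (s v) - spin (t v) :> R.
Proof.
move=> /forallP st; rewrite /magnetization (bigD1 v) //= [X in _ - X](bigD1 v) //=.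
suff -> : \sum_(w | w != v) spin (s w) = \sum_(w | w != v) spin (t w) :> R by ring.
by apply: eq_bigr => w wv; rewrite (eqP (implyP (st w) wv)).
Qed.

Lemma spin_sub_sqr_le (a b : bool) : (spin a - spin b) ^+ 2 <= 4 :> R.
Proof. by case: a; case: b; rewrite /spin /= expr2; lra. Qed.

Lemma glauber_magnetization_jump (s t : spins n) :
  P s t * (magnetization s - magnetization t) ^+ 2 <= 4 * P s t.
Proof.
rewrite glauberE -mulrA [X in _ <= X]mulrCA ler_wpM2l ?invr_ge0 ?ler0n //.
rewrite mulr_suml mulr_sumr; apply: ler_sum => v _.
case: ifP => st; last by rewrite !mul0r mulr0.
rewrite mulrC ler_wpM2r ?(magnetization_agree_off st) ?spin_sub_sqr_le //.
by rewrite divr_ge0 // ltW ?ising_mu_gt0 ?fiber_mass_gt0.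
Qed.

Lemma glauber_dirichlet_magnetization : (0 < n)%N -> glauber_dirichlet E J magnetization <= 2.
Proof.
move=> n_gt0; rewrite /glauber_dirichlet ler_pdivrMr // (_ : 2 * 2 = 4); last by ring.
have -> : 4 = \sum_s \sum_t mu s * (4 * P s t).
  rewrite -[LHS]mulr1 -(sum_ising_mu E J) mulr_sumr; apply: eq_bigr => s _.
  by rewrite -mulr_sumr -mulr_sumr glauber_row_sum // mulr1 mulrC.
apply: ler_sum => s _; apply: ler_sum => t _; rewrite -mulrA.
by rewrite ler_wpM2l ?glauber_magnetization_jump // ltW ?ising_mu_gt0.
Qed.

Lemma ising_varE (g : spins n -> R) : ising_var E J g = EE (fun t => g t * g t) - EE g * EE g.
Proof.
rewrite /ising_var /ising_E; set m := \sum_t mu t * g t.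
transitivity (\sum_t (mu t * (g t * g t) - 2 * m * (mu t * g t) + m * m * mu t)).
  by apply: eq_bigr => t _; ring.
by rewrite big_split sumrB /= -!mulr_sumr -/m sum_ising_mu; ring.
Qed.

Lemma sum_ising_cov : \sum_u \sum_v ising_cov E J u v = ising_var E J magnetization.
Proof.
have EM : EE magnetization = \sum_u EE (fun s => spin (s u)).
  rewrite /ising_E /magnetization; under eq_bigr do rewrite mulr_sumr.
  by rewrite exchange_big.
have EMM : EE (fun t => magnetization t * magnetization t) =
    \sum_u \sum_v EE (fun s => spin (s u) * spin (s v)).
  rewrite /ising_E /magnetization.
  transitivity (\sum_t \sum_u \sum_v mu t * (spin (t u) * spin (t v))).
    apply: eq_bigr => t _; rewrite mulr_suml mulr_sumr; apply: eq_bigr => u _.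
    by rewrite !mulr_sumr; apply: eq_bigr => v _; ring.
  by rewrite exchange_big; apply: eq_bigr => u _; rewrite exchange_big.
rewrite ising_varE EM EMM mulr_suml -sumrB; apply: eq_bigr => u _.
by rewrite mulr_sumr -sumrB.
Qed.

Lemma ising_cov_sym u v : ising_cov E J u v = ising_cov E J v u.
Proof.
rewrite /ising_cov mulrC; congr (_ - _).
by apply: eq_bigr => t _; rewrite [spin (t u) * _]mulrC.
Qed.

Lemma ising_cov_diag_ge0 u : 0 <= ising_cov E J u u.
Proof.
rewrite /ising_cov -ising_varE; apply: sumr_ge0 => t _.
by rewrite mulr_ge0 ?sqr_ge0 // ltW // ising_mu_gt0.
Qed.

Lemma pair_sum_ising_cov_le : pair_sum (ising_cov E J) [set: 'I_n] <= ising_var E J magnetization.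
Proof.
rewrite -sum_ising_cov /pair_sum /row_sum.
under eq_bigl do rewrite finset.in_setT; apply: ler_sum => u _.
under eq_bigl do rewrite finset.in_setT eq_sym.
by rewrite [X in _ <= X](bigD1 u) //= lerDr ising_cov_diag_ge0.
Qed.
End Magnetization.

Theorem lemma2p2 (R : realType) (n : nat) (E : rel 'I_n) (J : 'I_n -> 'I_n -> R)
  (E_sym : symmetric E) (E_irr : irreflexive E)
  (J_nonneg : forall u v, E u v -> 0 <= J u v)
  (s : seq R) (hs : is_spectrum (glauber_mx E J) s)
  (hgap : (gap_of s)^-1 <= n%:R * ln (n%:R : R)) :
  exists F : {set 'I_n},
    (#|F| : int) = Num.floor (Num.sqrt (n%:R : R) / ln (n%:R : R)) /\
    \sum_(u in F) \sum_(v in F | u != v) ising_cov E J u v <= 2 / ln (n%:R : R).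
Proof.
have [n_le1|n_gt1] := leqP n 1.
  have -> : ln (n%:R : R) = 0.
    by move: n_le1; rewrite leq_eqVlt ltnS leqn0 => /orP [] /eqP ->; rewrite ?ln1 ?ln0.
  by exists finset.set0; rewrite invr0 !mulr0 floor0 cards0 big_set0.
set L := ln (n%:R : R); set q := Num.sqrt (n%:R : R).
have L_ge : 1 - n%:R^-1 <= L := one_sub_inv_le_ln R (ltnW n_gt1).
have L_gt0 : 0 < L by rewrite ln_gt0 // ltr1n.
have [k floorE] : exists k : nat, Num.floor (q / L) = k%:Z.
  have : 0 <= Num.floor (q / L) by rewrite floor_ge0 divr_ge0 ?sqrtr_ge0 // ltW.
  by case: (Num.floor (q / L)) => [m _|//]; exists m.
have kL : k%:R * L <= q by rewrite -ler_pdivlMr //; have := floor_le (q / L); rewrite floorE.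
have k_le : (k <= #|'I_n|)%N by rewrite card_ord (leq_of_mulr_le_sqrt n_gt1 L_ge kL).
have [gap_gt0 poincare] := glauber_poincare magnetization (ltnW n_gt1) hs.
have var_le : ising_var E J magnetization <= 2 * n%:R * L.
  have := le_trans poincare (glauber_dirichlet_magnetization E J (ltnW n_gt1)).
  rewrite mulrC -ler_pdivlMr // => /le_trans; apply; rewrite -mulrA ler_wpM2l //.
have [F [cF hF]] := exists_subset_pair_sum_le (@ising_cov_sym R n E J) k_le.
exists F; split; first by rewrite cF floorE.
rewrite card_ord in hF.
apply: (pair_mean_bound _ L_gt0 _ _ hF (le_trans (pair_sum_ising_cov_le E J) var_le)).
- by rewrite ltr1n.
- by rewrite ler_nat -(card_ord n).
- by rewrite -(sqr_sqrtr (ler0n R n)) ler_sqr ?nnegrE ?sqrtr_ge0 // mulr_ge0 // ltW.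
Qed.
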